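(* Let $F_1:\mathbb{C}\to\mathbb{R}$, $F_1(z)=|z|^2(\ln|z|^2-1)$ for $z\ne0$ and $F_1(0)=0$. For all $z_1,z_2\in\mathbb{C}$, setting $\zeta:=z_1-z_2$, $$F_1(z_1)\le F_1(z_2)+2\Re(z_2\overline{\zeta})\ln|z_2|^2+2|\zeta|^2\Big(\ln\big(\max(|z_2|,|z_1|)\big)+1\Big),$$ where, when $z_2=0$, the second term on the right-hand side is understood as $0$, and when moreover $z_1=0$, the last term is also understood as $0$. *)

From Stdlib Require Import Reals.
From Coquelicot Require Import Coquelicot.
Open Scope R_scope.

Definition F1 (z : C) : R :=
  if Req_EM_T (Cmod z) 0 then 0
  else (Cmod z ^ 2) * (ln (Cmod z ^ 2) - 1).

Definition second_term (z2 zeta : C) : R :=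
  if Req_EM_T (Cmod z2) 0 then 0
  else 2 * Re (z2 * Cconj zeta) * ln (Cmod z2 ^ 2).

Definition last_term (z1 z2 zeta : C) : R :=
  if Req_EM_T (Rmax (Cmod z2) (Cmod z1)) 0 then 0
  else 2 * (Cmod zeta ^ 2) * (ln (Rmax (Cmod z2) (Cmod z1)) + 1).

(* Write a = |z1|, b = |z2| and p = Re(z1 conj z2), so that |zeta|^2 = a^2 + b^2 - 2p
   and p <= ab.  For a, b > 0 the right-hand side is affine in p with slope
   4 (ln b - ln (max a b) - 1) < 0, so it suffices to treat the aligned case p = ab.
   There, with t >= 1 the ratio of the larger to the smaller modulus, the inequality
   follows from ln t >= (t - 1) - (t - 1)^2 / 2 when a <= b, and from
   ln t <= (t - 1/t) / 2 when b <= a. *)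

From Stdlib Require Import Reals Lra Psatz.
From Coquelicot Require Import Coquelicot.
Open Scope R_scope.

Lemma le_of_is_derive_nonneg (f f' : R -> R) (a b : R) :
  a <= b ->
  (forall x, a <= x <= b -> is_derive f x (f' x)) ->
  (forall x, a < x < b -> 0 <= f' x) ->
  f a <= f b.
Proof.
  intros Hab Hder Hpos.
  destruct (Req_dec a b) as [<- | Hne]; [lra |].
  destruct (MVT_cor2 f f' a b) as [c [Hmvt Hc]]; [lra | |].
  - intros x Hx. apply is_derive_Reals, Hder, Hx.
  - pose proof (Hpos c Hc). nra.
Qed.

Lemma ln_ge_sub_half_sqr (t : R) : 1 <= t -> t - 1 - (t - 1) ^ 2 / 2 <= ln t.
Proof.
  intros Ht.
  enough (0 <= ln t - (t - 1) + (t - 1) ^ 2 / 2) by lra.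
  replace 0 with (ln 1 - (1 - 1) + (1 - 1) ^ 2 / 2) by (rewrite ln_1; lra).
  apply (le_of_is_derive_nonneg (fun x => ln x - (x - 1) + (x - 1) ^ 2 / 2)
           (fun x => (x - 1) ^ 2 / x)); [exact Ht | |].
  - intros x Hx. auto_derive; [lra | field; lra].
  - intros x Hx. apply Rdiv_le_0_compat; nra.
Qed.

Lemma ln_le_half_sub_inv (t : R) : 1 <= t -> ln t <= (t - / t) / 2.
Proof.
  intros Ht.
  enough (0 <= (t - / t) / 2 - ln t) by lra.
  replace 0 with ((1 - / 1) / 2 - ln 1) by (rewrite ln_1; field).
  apply (le_of_is_derive_nonneg (fun x => (x - / x) / 2 - ln x)
           (fun x => (x - 1) ^ 2 / (2 * x ^ 2))); [exact Ht | |].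
  - intros x Hx. auto_derive; [lra | field; lra].
  - intros x Hx. apply Rdiv_le_0_compat; nra.
Qed.

Lemma ln_sub_le_of_le (a b : R) :
  0 < a -> a <= b -> 2 * a ^ 2 * (ln a - ln b) <= (a - b) * (3 * a - b).
Proof.
  intros Ha Hab.
  set (t := b / a).
  assert (Ht : 1 <= t) by (apply Rcomplements.Rle_div_r; lra).
  assert (Hb : b = t * a) by (unfold t; field; lra).
  rewrite Hb, ln_mult by lra.
  pose proof (ln_ge_sub_half_sqr t Ht) as Hln.
  replace (2 * a ^ 2 * (ln a - (ln t + ln a))) with (a ^ 2 * (- 2 * ln t)) by ring.
  replace ((a - t * a) * (3 * a - t * a)) with (a ^ 2 * ((t - 1) * (t - 3))) by ring.
  apply Rmult_le_compat_l; nra.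
Qed.

Lemma ln_sub_le_of_ge (a b : R) :
  0 < b -> b <= a -> 2 * b * (2 * a - b) * (ln a - ln b) <= (a - b) * (3 * a - b).
Proof.
  intros Hb Hba.
  set (t := a / b).
  assert (Ht : 1 <= t) by (apply Rcomplements.Rle_div_r; lra).
  assert (Ha : a = t * b) by (unfold t; field; lra).
  rewrite Ha, ln_mult by lra.
  pose proof (ln_le_half_sub_inv t Ht) as Hln.
  replace (2 * b * (2 * (t * b) - b) * (ln t + ln b - ln b))
    with (b ^ 2 * ((2 * t - 1) * (2 * ln t))) by ring.
  replace ((t * b - b) * (3 * (t * b) - b)) with (b ^ 2 * ((t - 1) * (3 * t - 1))) by ring.
  apply Rmult_le_compat_l; [nra |].
  assert (Hcubic : (t - 1) * (3 * t - 1) - (2 * t - 1) * (t - / t) = (t - 1) ^ 3 / t)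
    by (field; lra).
  assert (0 <= (t - 1) ^ 3 / t) by (apply Rdiv_le_0_compat; [apply pow_le |]; lra).
  nra.
Qed.

Lemma F1_bound_aligned (a b : R) :
  0 < a -> 0 < b ->
  a ^ 2 * (2 * ln a - 1) <=
  b ^ 2 * (2 * ln b - 1) + 4 * (a * b - b ^ 2) * ln b + 2 * (a - b) ^ 2 * (ln (Rmax b a) + 1).
Proof.
  intros Ha Hb.
  enough (0 <= (a - b) * (3 * a - b) - 2 * a ^ 2 * (ln a - ln b)
               + 2 * (a - b) ^ 2 * (ln (Rmax b a) - ln b)) by nra.
  destruct (Rle_dec a b) as [Hab | Hba].
  - rewrite Rmax_left by lra. pose proof (ln_sub_le_of_le a b Ha Hab). lra.
  - rewrite Rmax_right by lra. pose proof (ln_sub_le_of_ge a b Hb ltac:(lra)). nra.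
Qed.

Lemma F1_bound_pos (a b p : R) :
  0 < a -> 0 < b -> p <= a * b ->
  a ^ 2 * (2 * ln a - 1) <=
  b ^ 2 * (2 * ln b - 1) + 4 * (p - b ^ 2) * ln b
  + 2 * (a ^ 2 + b ^ 2 - 2 * p) * (ln (Rmax b a) + 1).
Proof.
  intros Ha Hb Hp.
  pose proof (F1_bound_aligned a b Ha Hb).
  assert (ln b <= ln (Rmax b a)) by (apply ln_le; [lra | apply Rmax_l]).
  assert (0 <= (a * b - p) * (ln (Rmax b a) + 1 - ln b)) by (apply Rmult_le_pos; lra).
  nra.
Qed.

Lemma F1_bound_real (a b p : R) :
  0 <= a -> 0 <= b -> Rabs p <= a * b ->
  a ^ 2 * (ln (a ^ 2) - 1) <=
  b ^ 2 * (ln (b ^ 2) - 1) + 2 * (p - b ^ 2) * ln (b ^ 2)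
  + 2 * (a ^ 2 + b ^ 2 - 2 * p) * (ln (Rmax b a) + 1).
Proof.
  intros Ha Hb Hp.
  assert (Hp0 : a * b = 0 -> p = 0).
  { intros Hab. apply Rabs_eq_0, Rle_antisym; [lra | apply Rabs_pos]. }
  destruct (Req_dec b 0) as [-> | Hb0].
  - rewrite Hp0 by ring. rewrite Rmax_right by exact Ha.
    destruct (Req_dec a 0) as [-> | Ha0]; [lra |].
    rewrite ln_pow by lra. simpl INR. nra.
  - destruct (Req_dec a 0) as [-> | Ha0].
    + rewrite Hp0 by ring. rewrite Rmax_left by lra. rewrite (ln_pow b) by lra.
      simpl INR. nra.
    + rewrite !ln_pow by lra. simpl INR.
      pose proof (F1_bound_pos a b p ltac:(lra) ltac:(lra) (Rle_trans _ _ _ (Rle_abs p) Hp)).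
      lra.
Qed.

Lemma F1_eq (z : C) : F1 z = Cmod z ^ 2 * (ln (Cmod z ^ 2) - 1).
Proof. unfold F1. destruct (Req_EM_T (Cmod z) 0) as [-> | _]; [ring | reflexivity]. Qed.

Lemma second_term_eq (z2 zeta : C) :
  second_term z2 zeta = 2 * Re (z2 * Cconj zeta) * ln (Cmod z2 ^ 2).
Proof.
  unfold second_term. destruct (Req_EM_T (Cmod z2) 0) as [H0 | _]; [| reflexivity].
  apply Cmod_eq_0 in H0. subst z2. simpl. ring.
Qed.

Lemma last_term_eq (z1 z2 : C) :
  last_term z1 z2 (z1 - z2) = 2 * Cmod (z1 - z2) ^ 2 * (ln (Rmax (Cmod z2) (Cmod z1)) + 1).
Proof.
  unfold last_term. destruct (Req_EM_T (Rmax (Cmod z2) (Cmod z1)) 0) as [H0 | _]; [| reflexivity].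
  assert (z1 = 0 /\ z2 = 0) as [-> ->].
  { pose proof (Rmax_l (Cmod z2) (Cmod z1)). pose proof (Rmax_r (Cmod z2) (Cmod z1)).
    pose proof (Cmod_ge_0 z1). pose proof (Cmod_ge_0 z2).
    split; apply Cmod_eq_0; lra. }
  replace (0 - 0)%C with (0 : C) by ring. rewrite Cmod_0. ring.
Qed.

Lemma Re_mul_Cconj_sub (z1 z2 : C) :
  Re (z2 * Cconj (z1 - z2)) = Re (z1 * Cconj z2) - Cmod z2 ^ 2.
Proof. rewrite Cmod2_alt. destruct z1, z2. simpl. ring. Qed.

Lemma Cmod_sub_sqr (z1 z2 : C) :
  Cmod (z1 - z2) ^ 2 = Cmod z1 ^ 2 + Cmod z2 ^ 2 - 2 * Re (z1 * Cconj z2).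
Proof. rewrite !Cmod2_alt. destruct z1, z2. simpl. ring. Qed.

Lemma Rabs_Re_mul_Cconj_le (z1 z2 : C) : Rabs (Re (z1 * Cconj z2)) <= Cmod z1 * Cmod z2.
Proof. rewrite <- (Cmod_conj z2), <- Cmod_mult. apply re_le_Cmod. Qed.

Theorem mainTheorem8 (z1 z2 : C) :
  let zeta := (z1 - z2)%C in
  F1 z1 <= F1 z2 + second_term z2 zeta + last_term z1 z2 zeta.
Proof.
  intros zeta. unfold zeta.
  rewrite !F1_eq, second_term_eq, last_term_eq, Re_mul_Cconj_sub, Cmod_sub_sqr.
  apply F1_bound_real.
  - apply Cmod_ge_0.
  - apply Cmod_ge_0.
  - apply Rabs_Re_mul_Cconj_le.
Qed.
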